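(* For every hypergraph $\mathcal{H}$: (a) $\operatorname{coind}(B_0(\operatorname{KG}(\mathcal{H})))\geq \dim(\mathcal{H})\geq |V(\mathcal{H})|-\operatorname{alt}(\mathcal{H})-1$; (b) $\operatorname{coind}(B(\operatorname{KG}(\mathcal{H})))\geq \operatorname{sdim}(\mathcal{H})\geq |V(\mathcal{H})|-\operatorname{salt}(\mathcal{H})-1$.
   Context: A hypergraph $\mathcal{H}=(V,E)$ consists of a finite nonempty vertex set $V$ and a family $E$ of distinct nonempty subsets of $V$; $\mathcal{H}[U]$ is the induced subhypergraph on $U\subseteq V$ with edges $\{e\in E:e\subseteq U\}$. $\operatorname{KG}(\mathcal{H})$ is the graph with vertex set $E$ in which two edges are adjacent iff disjoint. $S^d\subset\mathbb{R}^{d+1}$ is the unit sphere ($S^{-1}=\varnothing$), $H(x)=\{y\in S^d:\langle x,y\rangle>0\}$. $\dim(\mathcal{H})$ (resp. $\operatorname{sdim}(\mathcal{H})$) is the maximum integer $d\geq-1$ for which there is a map $\varphi:V\to S^d$ such that for every $x\in S^d$, at least one of (resp. both of) $H(x)$ and $H(-x)$ contains $\varphi(e)$ for some edge $e\in E$. Let $n=|V|$. For $X\in\{+,-,0\}^n$, $\operatorname{alt}(X)$ is the maximum length of a subsequence of nonzero terms of $X$ with consecutive terms of different signs ($\operatorname{alt}(0,\dots,0)=0$); $X^\pm=\{j:x_j=\pm\}$. For a bijection $\sigma:[n]\to V$, $\operatorname{alt}(\mathcal{H},\sigma)=\max\{\operatorname{alt}(X):\max(|E(\mathcal{H}[\sigma(X^+)])|,|E(\mathcal{H}[\sigma(X^-)])|)=0\}$,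 $\operatorname{salt}(\mathcal{H},\sigma)=\max\{\operatorname{alt}(X):\min(|E(\mathcal{H}[\sigma(X^+)])|,|E(\mathcal{H}[\sigma(X^-)])|)=0\}$; $\operatorname{alt}(\mathcal{H})$, $\operatorname{salt}(\mathcal{H})$ are the minima of these over all bijections $\sigma$. For a graph $G$ and $A\subseteq V(G)$, $\operatorname{CN}(A)=\{v: av\in E(G)\ \forall a\in A\}$. $B_0(G)$ is the simplicial complex on $V(G)\times\{1,2\}$ with simplices $(A\times\{1\})\cup(B\times\{2\})$ for disjoint $A,B\subseteq V(G)$ with every vertex of $A$ adjacent to every vertex of $B$; $B(G)$ is the subcomplex of those simplices with additionally $\operatorname{CN}(A)\neq\varnothing\neq\operatorname{CN}(B)$. Both have the free involution $(v,1)\leftrightarrow(v,2)$. $\operatorname{coind}(T)$ of a free $\mathbb{Z}_2$-space $T$ is the maximum $d\geq0$ admitting a continuous equivariant map $S^d\to T$ (antipodal map on $S^d$); coind of a complex refers to its geometric realization. *)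

From HB Require Import structures.
From mathcomp Require Import all_boot all_order all_algebra.
From mathcomp Require Import all_classical all_reals all_analysis.
Set Implicit Arguments. Unset Strict Implicit. Unset Printing Implicit Defensive.
Import Order.TTheory GRing.Theory Num.Theory.
Import numFieldNormedType.Exports.
Local Open Scope classical_set_scope.
Local Open Scope ring_scope.

(* S^d = unit sphere of R^(d+1), represented as row vectors 'rV[R]_d.+1, d >= 0.
   (S^{-1} = empty is treated separately where needed.) *)
Definition inner (R : realType) (k : nat) (x y : 'rV[R]_k) : R :=
  \sum_(i < k) x ord0 i * y ord0 i.

Definition sphere (R : realType) (d : nat) : set 'rV[R]_d.+1 :=
  [set x | inner x x = 1].

Definition hemi (R : realType) (k : nat) (x y : 'rV[R]_k) : Prop := 0 < inner x y.

Local Close Scope classical_set_scope.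

Definition hits (R : realType) (V : finType) (E : {set {set V}}) (d : nat)
  (phi : V -> 'rV[R]_d.+1) (x : 'rV[R]_d.+1) : Prop :=
  exists2 e, e \in E & forall v, v \in e -> hemi x (phi v).

Definition dim_admissible (R : realType) (V : finType) (E : {set {set V}}) (d : nat) : Prop :=
  exists phi : V -> 'rV[R]_d.+1,
    (forall v, @sphere R d (phi v)) /\
    (forall x, @sphere R d x -> hits E phi x \/ hits E phi (- x)).

Definition sdim_admissible (R : realType) (V : finType) (E : {set {set V}}) (d : nat) : Prop :=
  exists phi : V -> 'rV[R]_d.+1,
    (forall v, @sphere R d (phi v)) /\
    (forall x, @sphere R d x -> hits E phi x /\ hits E phi (- x)).
(* d = -1 is always admissible (S^{-1} is empty), so dim, sdim >= -1. *)

(* sign vectors X in {+,-,0}^n : Some true = +, Some false = -, None = 0 *)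
Definition signvec (n : nat) := {ffun 'I_n -> option bool}.

Definition alternating (s : seq (option bool)) : bool :=
  all (fun o => o != None) s && sorted (fun a b => a != b) s.

Definition altX (n : nat) (X : signvec n) : nat :=
  \max_(m : {ffun 'I_n -> bool})
     (let s := [seq X i | i <- enum 'I_n & m i] in
      if alternating s then size s else 0%N).

Definition Xplus (n : nat) (X : signvec n) : {set 'I_n} := [set j | X j == Some true].
Definition Xminus (n : nat) (X : signvec n) : {set 'I_n} := [set j | X j == Some false].

Definition induced_edges (V : finType) (E : {set {set V}}) (U : {set V}) : {set {set V}} :=
  [set e in E | e \subset U].

Definition ordering (V : finType) := {ffun 'I_#|V| -> V}.

Definition alt_sigma (V : finType) (E : {set {set V}}) (s : ordering V) : nat :=
  \max_(X : signvec #|V| |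
        maxn #|induced_edges E (s @: Xplus X)| #|induced_edges E (s @: Xminus X)| == 0%N)
     altX X.

Definition salt_sigma (V : finType) (E : {set {set V}}) (s : ordering V) : nat :=
  \max_(X : signvec #|V| |
        minn #|induced_edges E (s @: Xplus X)| #|induced_edges E (s @: Xminus X)| == 0%N)
     altX X.

(* minimum over all bijections (the neutral element #|V| is an upper bound of
   alt(H,sigma), and bijections exist, so it does not affect the value) *)
Definition alt (V : finType) (E : {set {set V}}) : nat :=
  \big[minn/#|V|]_(s : ordering V | injectiveb s) alt_sigma E s.

Definition salt (V : finType) (E : {set {set V}}) : nat :=
  \big[minn/#|V|]_(s : ordering V | injectiveb s) salt_sigma E s.

Definition KGvert (V : finType) (E : {set {set V}}) := {e : {set V} | e \in E}.

Definition KGadj (V : finType) (E : {set {set V}}) : rel (KGvert E) :=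
  fun a b => [disjoint val a & val b].

(* (v, true) stands for (v,1), (v, false) for (v,2) *)
Definition part1 (T : finType) (S : {set T * bool}) : {set T} := [set v | (v, true) \in S].
Definition part2 (T : finType) (S : {set T * bool}) : {set T} := [set v | (v, false) \in S].

Definition CN (T : finType) (adj : rel T) (A : {set T}) : {set T} :=
  [set v | [forall a in A, adj a v]].

Definition B0 (T : finType) (adj : rel T) (S : {set T * bool}) : bool :=
  [disjoint part1 S & part2 S] &&
  [forall a in part1 S, forall b in part2 S, adj a b].

Definition Bc (T : finType) (adj : rel T) (S : {set T * bool}) : bool :=
  B0 adj S && (CN adj (part1 S) != finset.set0) && (CN adj (part2 S) != finset.set0).

Definition swap (T : finType) (w : T * bool) : T * bool := (w.1, ~~ w.2).

(* geometric realization of a simplicial complex K on a finite vertex set W,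
   as points of R^W with barycentric coordinates *)
Definition realization (R : realType) (W : finType) (K : pred {set W}) : set (W -> R) :=
  [set t | (forall w, 0 <= t w) /\ \sum_(w : W) t w = 1 /\ K [set w | t w != 0]%SET]%classic.

Local Open Scope classical_set_scope.

Definition equivariant_map (R : realType) (T : finType) (K : pred {set T * bool}) (d : nat)
  (f : 'rV[R]_d.+1 -> (T * bool -> R)) : Prop :=
  (forall x, @sphere R d x -> @realization R _ K (f x)) /\
  (forall x, @sphere R d x -> f (- x) = (fun w => f x (swap w))) /\
  (forall w, {within @sphere R d, continuous (fun x => f x w)}).

(* coind(|K|) >= d  (d >= 0), coind being the maximum d' admitting such a map *)
Definition coind_ge (R : realType) (T : finType) (K : pred {set T * bool}) (d : nat) : Prop :=
  exists d' : nat, (d <= d')%N /\ exists f, @equivariant_map R T K d' f.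

From Pilot Require Import Defs.
From HB Require Import structures.
From mathcomp Require Import all_boot all_order all_algebra.
From mathcomp Require Import all_classical all_reals all_analysis.
From mathcomp Require Import polyrcf.
From mathcomp Require Import zify.
Set Implicit Arguments. Unset Strict Implicit. Unset Printing Implicit Defensive.
Import Order.TTheory GRing.Theory Num.Theory.
Import numFieldNormedType.Exports.
Local Open Scope ring_scope.

(* The lower bounds for coind come from an explicit equivariant map: given phi
   witnessing dim (resp. sdim) >= d, send x in S^d to the point of the box
   complex with barycentric weight prod_(v in e) max(<+-x, phi v>, 0) on the
   vertex (e, +-).  Its support pairs edges inside H(x) with edges inside
   H(-x); these are disjoint, hence adjacent in KG(H).

   For the lower bounds by alternation numbers, order V by an optimal sigma and
   put sigma(j) at the normalized moment-curve point ((-1)^j j^k)_(k <= d).  Then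
   <x, phi(sigma j)> is a positive multiple of (-1)^j p(j), where p is the
   nonzero polynomial of degree <= d with coefficient vector x.  Each real root
   of p destroys at most one alternation, so the sign vector of x alternates at
   least n - d > alt(H, sigma) times, which forces an edge of H inside H(x) or
   H(-x). *)

Section SignAlternation.
Variable R : rcfType.
Implicit Types (t c : nat -> R) (L : seq nat).

Definition opposite_signs t : rel nat := fun i j => t i * t j < 0.

Definition sign_alternating t L : bool :=
  all (fun i => t i != 0) L && sorted (opposite_signs t) L.

Lemma opposite_signs_scale (P : pred nat) c t :
  {in P &, forall i j, 0 < c i * c j} ->
  {in P &, subrel (opposite_signs t) (opposite_signs (fun i => c i * t i))}.
Proof.
move=> cP i j Pi Pj; rewrite /opposite_signs => tij.
by rewrite mulrACA pmulr_rlt0 ?cP.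
Qed.

Lemma sign_alternating_scale c t L :
  {in L &, forall i j, 0 < c i * c j} ->
  sign_alternating t L -> sign_alternating (fun i => c i * t i) L.
Proof.
move=> cL /andP[t0 tL]; apply/andP; split.
  apply/allP => i Li; rewrite mulf_neq0 ?(allP t0) //.
  by apply: contraTneq (cL i i Li Li) => ->; rewrite mul0r ltxx.
by apply: (sub_in_sorted (P := mem L) (opposite_signs_scale cL)) tL; apply/allP.
Qed.

Lemma opposite_signs_twice t i j k :
  opposite_signs t i j -> opposite_signs t j k -> 0 < t i * t k.
Proof.
rewrite /opposite_signs => tij tjk.
have tj0 : t j != 0 by apply: contraTneq tij => ->; rewrite mulr0 ltxx.
have : 0 < (t i * t k) * (t j * t j) by rewrite mulrACA [t k * _]mulrC nmulr_rgt0.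
by rewrite pmulr_lgt0 // lt_def mulf_neq0 //= -expr2 sqr_ge0.
Qed.

(* The neighbours of the pivot x have equal signs for t, and the factor i - r
   flips the sign of exactly one of them. *)
Lemma sign_alternating_drop_pivot t r s1 x s2 :
  all (fun i => i%:R < r) s1 -> all (fun i => r < i%:R) s2 ->
  sign_alternating t (s1 ++ x :: s2) ->
  sign_alternating (fun i => (i%:R - r) * t i) (s1 ++ s2).
Proof.
set c := fun i : nat => i%:R - r.
have below : {in (fun i => i%:R < r) &, forall i j, 0 < c i * c j}.
  by move=> i j ir jr; rewrite nmulr_rgt0 subr_lt0.
have above : {in (fun i => r < i%:R) &, forall i j, 0 < c i * c j}.
  by move=> i j ir jr; rewrite mulr_gt0 ?subr_gt0.
move=> s1r s2r /andP[]; rewrite all_cat /= => /and3P[t1 _ t2].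
have u0 : all (fun i => c i * t i != 0) (s1 ++ s2).
  rewrite all_cat; apply/andP; split; apply/allP => i si.
    by rewrite mulf_neq0 ?(allP t1) // subr_eq0 lt_eqF ?(allP s1r).
  by rewrite mulf_neq0 ?(allP t2) // subr_eq0 gt_eqF ?(allP s2r).
case: s1 s1r t1 u0 => [|y s1] s1r t1 u0 /=.
  move=> /path_sorted ts2; rewrite /sign_alternating u0 /=.
  exact: (sub_in_sorted (opposite_signs_scale above) s2r ts2).
rewrite /sign_alternating u0 /= !cat_path => /andP[p1 /andP[tzx txs2]].
apply/andP; split.
  exact: (sub_in_path (opposite_signs_scale below) s1r p1).
case: s2 s2r txs2 {t2 u0} => //= z s2 s2r /andP[txz p2].
apply/andP; split; last exact: (sub_in_path (opposite_signs_scale above) s2r p2).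
have ly : (last y s1)%:R < r by apply: (allP s1r); exact: mem_last.
rewrite /opposite_signs mulrACA nmulr_rlt0 ?(opposite_signs_twice tzx txz) //.
by rewrite nmulr_rlt0 ?subr_lt0 // subr_gt0; case/andP: s2r.
Qed.

Lemma sign_alternating_mul_linear t r L :
  sorted ltn L -> sign_alternating t L ->
  exists2 L', subseq L' L &
    sign_alternating (fun i => (i%:R - r) * t i) L' && (size L <= (size L').+1)%N.
Proof.
case: (boolP (has (fun i => r <= i%:R) L)) => [hasL | /hasPn belowL].
  case: (split_find hasL) => x s1 s2 rx /hasPn s1r; rewrite cat_rcons => ltL altL.
  exists (s1 ++ s2); first exact: cat_subseq (subseq_refl s1) (subseq_cons s2 x).
  rewrite size_cat /= size_cat addnS leqnn andbT.
  apply: sign_alternating_drop_pivot altL; apply/allP => i si.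
    by rewrite ltNge; apply: s1r.
  have x_lt : sorted ltn (x :: s2) by case: (cat_sorted2 ltL).
  rewrite /= path_sortedE in x_lt; last exact: ltn_trans.
  have xi : (x < i)%N by case/andP: x_lt => /allP/(_ i si).
  by apply: le_lt_trans rx _; rewrite ltr_nat.
move=> _ altL; exists L => //; rewrite leqnSn andbT.
apply: sign_alternating_scale altL => i j Li Lj.
by rewrite nmulr_rgt0 subr_lt0 ltNge ?belowL.
Qed.

Lemma sorted_iota_succ (e : rel nat) m n : (forall i, e i i.+1) -> sorted e (iota m n).
Proof. by move=> e_succ; case: n => //= n; elim: n m => //= n IH m; rewrite e_succ IH. Qed.

Definition signed_eval (p : {poly R}) (i : nat) : R := (-1) ^+ i * p.[i%:R].

Lemma sign_alternating_noroot n (p : {poly R}) :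
  (forall x, ~~ root p x) -> sign_alternating (signed_eval p) (iota 0 n).
Proof.
move=> noroot; apply/andP; split.
  by apply/allP => i _; rewrite mulf_neq0 ?signr_eq0 ?noroot.
apply: sorted_iota_succ => i; rewrite /opposite_signs /signed_eval exprS mulN1r mulNr.
rewrite mulrN mulrACA -expr2 sqrr_sign mul1r oppr_lt0 ltNge; apply/negP => pi_le0.
have i_le : (i%:R : R) <= i.+1%:R by rewrite ler_nat.
by have [x _] := polyrcf.poly_ivt i_le pi_le0; apply/negP.
Qed.

Lemma signed_eval_mul_XsubC (q : {poly R}) r i :
  signed_eval (q * ('X - r%:P)) i = (i%:R - r) * signed_eval q i.
Proof. by rewrite /signed_eval hornerM hornerXsubC mulrA mulrC. Qed.

Lemma poly_sign_alternation n (p : {poly R}) : p != 0 ->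
  exists2 L, subseq L (iota 0 n) &
    sign_alternating (signed_eval p) L && (n <= size L + (size p).-1)%N.
Proof.
have [k] := ubnP (size p); elim: k p => // k IH p size_p p0.
have [[r /factor_theorem [q pq]] | noroot] := pselect (exists r, root p r); last first.
  exists (iota 0 n) => //; rewrite size_iota leq_addr andbT.
  by apply: sign_alternating_noroot => x; apply/negP => px; apply: noroot; exists x.
have q0 : q != 0 by apply: contra_neq p0; rewrite pq => ->; rewrite mul0r.
have size_pq : size p = (size q).+1 by rewrite pq size_Mmonic ?monicXsubC ?size_XsubC ?addn2.
have [|L Ln /andP[altL sizeL]] := IH q _ q0; first by rewrite -ltnS -size_pq.
have ltL := subseq_sorted ltn_trans Ln (iota_ltn_sorted 0 n).
have [L' L'L /andP[altL' sizeL']] := sign_alternating_mul_linear r ltL altL.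
exists L'; first exact: subseq_trans L'L Ln.
have -> : signed_eval p = fun i => (i%:R - r) * signed_eval q i.
  by apply: funext => i; rewrite pq signed_eval_mul_XsubC.
have q_gt0 : (0 < size q)%N by rewrite size_poly_gt0.
rewrite altL' size_pq /= (leq_trans sizeL) // -{2}(prednK q_gt0) -addSnnS.
by rewrite leq_add2r.
Qed.


Definition sign_entry (s : R) : option bool := if s == 0 then None else Some (0 < s).

Lemma sign_entry_opposite t :
  subrel (opposite_signs t) (relpre (fun i => sign_entry (t i)) (fun a b => a != b)).
Proof.
move=> i j; rewrite /opposite_signs /sign_entry /= => tij.
have ti0 : t i != 0 by apply: contraTneq tij => ->; rewrite mul0r ltxx.
have tj0 : t j != 0 by apply: contraTneq tij => ->; rewrite mulr0 ltxx.
rewrite (negPf ti0) (negPf tj0); apply: contraTneq tij => -[ti_tj].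
rewrite -leNgt; case: (ltP 0 (t i)) ti_tj => [ti_gt0 /esym tj_gt0 | ti_le0 /esym/negbT].
  by rewrite ltW ?mulr_gt0.
by rewrite -leNgt => tj_le0; rewrite mulr_le0.
Qed.

Lemma altX_ge_sign_alternating n t L (X : signvec n) :
  (forall j : 'I_n, X j = sign_entry (t j)) -> subseq L (iota 0 n) ->
  sign_alternating t L -> (size L <= altX X)%N.
Proof.
move=> tX Ln /andP[t0 tL].
pose m : {ffun 'I_n -> bool} := [ffun j => val j \in L].
have select_L : [seq val j | j <- enum 'I_n & m j] = L.
  rewrite (eq_filter (a2 := preim val (mem L))) => [|j]; last by rewrite ffunE.
  by rewrite -filter_map val_enum_ord -(subseq_uniqP (iota_uniq 0 n) Ln).
apply: leq_trans (leq_bigmax m) => /=.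
have -> : [seq X j | j <- enum 'I_n & m j] = [seq sign_entry (t i) | i <- L].
  by rewrite -select_L -map_comp; apply: eq_map => j; rewrite /= tX.
rewrite /Defs.alternating all_map sorted_map (sub_sorted (@sign_entry_opposite t) tL).
rewrite size_map andbT ifT //; apply: sub_all t0 => i /=.
by rewrite /sign_entry; case: eqP.
Qed.

End SignAlternation.

Section InnerProduct.
Variables (R : realType) (k : nat).
Implicit Types x y : 'rV[R]_k.

Lemma inner_oppl x y : inner (- x) y = - inner x y.
Proof. by rewrite /inner -sumrN; apply: eq_bigr => i _; rewrite mxE mulNr. Qed.

Lemma inner_oppr x y : inner x (- y) = - inner x y.
Proof. by rewrite /inner -sumrN; apply: eq_bigr => i _; rewrite mxE mulrN. Qed.

Lemma inner_scalel c x y : inner (c *: x) y = c * inner x y.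
Proof. by rewrite /inner mulr_sumr; apply: eq_bigr => i _; rewrite mxE mulrA. Qed.

Lemma inner_scaler c x y : inner x (c *: y) = c * inner x y.
Proof. by rewrite /inner mulr_sumr; apply: eq_bigr => i _; rewrite mxE mulrCA. Qed.

Lemma inner_self_gt0 y : y != 0 -> 0 < inner y y.
Proof.
move=> y0; rewrite lt_def sumr_ge0 => [|i _]; last by rewrite -expr2 sqr_ge0.
rewrite andbT; apply: contra y0 => /eqP/psumr_eq0P y2_0.
apply/eqP/rowP => i; rewrite mxE; apply/eqP.
by rewrite -sqrf_eq0 expr2 y2_0 // => j _; rewrite -expr2 sqr_ge0.
Qed.

Lemma inner_continuous y : continuous (fun x => inner x y).
Proof.
apply: (continuous_big add_continuous) => i _ x.
by apply: continuousM; [exact: coord_continuous | exact: cst_continuous].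
Qed.

Lemma inner_self_continuous : continuous (fun x => inner x x).
Proof.
apply: (continuous_big add_continuous) => i _ x.
by apply: continuousM; exact: coord_continuous.
Qed.

Definition normalize y : 'rV[R]_k := (Num.sqrt (inner y y))^-1 *: y.

End InnerProduct.

Lemma sphere_normalize (R : realType) d (y : 'rV[R]_d.+1) : y != 0 -> sphere (normalize y).
Proof.
move=> y0; have y2_gt0 := inner_self_gt0 y0.
rewrite /sphere /normalize /= inner_scalel inner_scaler mulrA -expr2 exprVn.
by rewrite sqr_sqrtr ?ltW // mulVf // gt_eqF.
Qed.

Lemma sphere_neq0 (R : realType) d (x : 'rV[R]_d.+1) : sphere x -> x != 0.
Proof.
move=> x_sphere; apply/eqP => x0; move: x_sphere; rewrite /sphere /= x0 /inner big1.
  by move/eqP; rewrite eq_sym oner_eq0.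
by move=> i _; rewrite mxE mul0r.
Qed.

Section MomentCurve.
Variables (R : realType) (d : nat).
Implicit Types x : 'rV[R]_d.+1.

Definition moment_vector (i : nat) : 'rV[R]_d.+1 := \row_(k < d.+1) ((-1) ^+ i * i%:R ^+ k).

Definition poly_of_row x : {poly R} := \poly_(k < d.+1) x ord0 (inord k).

Lemma inner_moment_vector x i : inner x (moment_vector i) = signed_eval (poly_of_row x) i.
Proof.
rewrite /signed_eval horner_poly mulr_sumr; apply: eq_bigr => k _.
by rewrite mxE inord_val mulrCA.
Qed.

Lemma moment_vector_neq0 i : moment_vector i != 0.
Proof. by apply/eqP => /rowP/(_ ord0); rewrite !mxE expr0 mulr1 => /eqP; rewrite signr_eq0. Qed.

Lemma poly_of_row_eq0 x : (poly_of_row x == 0) = (x == 0).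
Proof.
apply/eqP/eqP => [x0 | ->]; last first.
  by apply/polyP => k; rewrite coef_poly mxE coef0; case: ifP.
apply/rowP => k; have := congr1 (fun q : {poly R} => q`_k) x0.
by rewrite coef_poly ltn_ord coef0 inord_val mxE.
Qed.

End MomentCurve.

Section SignPattern.
Variables (R : realType) (V : finType) (E : {set {set V}}) (d : nat).
Variables (phi : V -> 'rV[R]_d.+1) (sigma : ordering V).

Definition sign_pattern (x : 'rV[R]_d.+1) : signvec #|V| :=
  [ffun j => sign_entry (inner x (phi (sigma j)))].

Lemma hits_of_Xplus x :
  (0 < #|induced_edges E (sigma @: Xplus (sign_pattern x))|)%N -> hits E phi x.
Proof.
rewrite card_gt0 => /set0Pn[e]; rewrite inE => /andP[Ee /fintype.subsetP e_sub].
exists e => // v /e_sub /imsetP[j]; rewrite inE ffunE /sign_entry => /eqP + ->.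
by case: eqP => // _ [].
Qed.

Lemma hits_of_Xminus x :
  (0 < #|induced_edges E (sigma @: Xminus (sign_pattern x))|)%N -> hits E phi (- x).
Proof.
rewrite card_gt0 => /set0Pn[e]; rewrite inE => /andP[Ee /fintype.subsetP e_sub].
exists e => // v /e_sub /imsetP[j]; rewrite inE ffunE /sign_entry => /eqP + ->.
rewrite /hemi inner_oppl oppr_gt0; case: eqP => // /eqP xv0 [] /negbT.
by rewrite -leNgt le_eqVlt (negPf xv0).
Qed.

Hypothesis phi_sphere : forall v, sphere (phi v).
Hypothesis altX_bound : forall x, sphere x -> (#|V| <= altX (sign_pattern x) + d)%N.

Lemma dim_admissible_of_alt_sigma : (alt_sigma E sigma + d < #|V|)%N -> dim_admissible R E d.
Proof.
move=> alt_lt; exists phi; split => // x /altX_bound altX_ge.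
have [plus0 | /hits_of_Xplus] := posnP #|induced_edges E (sigma @: Xplus (sign_pattern x))|;
  last by left.
have [minus0 | /hits_of_Xminus] := posnP #|induced_edges E (sigma @: Xminus (sign_pattern x))|;
  last by right.
have : (altX (sign_pattern x) <= alt_sigma E sigma)%N.
  by apply: leq_bigmax_cond; rewrite plus0 minus0.
lia.
Qed.

Lemma sdim_admissible_of_salt_sigma : (salt_sigma E sigma + d < #|V|)%N -> sdim_admissible R E d.
Proof.
move=> salt_lt; exists phi; split => // x /altX_bound altX_ge.
suff [/hits_of_Xplus ? /hits_of_Xminus ?] :
  (0 < #|induced_edges E (sigma @: Xplus (sign_pattern x))|)%N /\
  (0 < #|induced_edges E (sigma @: Xminus (sign_pattern x))|)%N by [].
rewrite !lt0n; apply/andP; rewrite -negb_or; apply/negP => empty_side.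
have : (altX (sign_pattern x) <= salt_sigma E sigma)%N.
  by apply: leq_bigmax_cond; case/orP: empty_side => /eqP ->; rewrite ?min0n ?minn0.
lia.
Qed.

End SignPattern.

Section MomentEmbedding.
Variables (R : realType) (V : finType) (d : nat).
Variables (sigma : ordering V) (g : V -> 'I_#|V|).
Hypothesis sigmaK : cancel sigma g.

Definition moment_embedding (v : V) : 'rV[R]_d.+1 := normalize (moment_vector R d (g v)).

Lemma moment_embedding_sphere v : sphere (moment_embedding v).
Proof. exact/sphere_normalize/moment_vector_neq0. Qed.

Lemma altX_moment_pattern x :
  sphere x -> (#|V| <= altX (sign_pattern moment_embedding sigma x) + d)%N.
Proof.
move=> /sphere_neq0 x0; have p0 : poly_of_row x != 0 by rewrite poly_of_row_eq0.
have [L Ln /andP[altL sizeL]] := poly_sign_alternation #|V| p0.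
pose c i := (Num.sqrt (inner (moment_vector R d i) (moment_vector R d i)))^-1.
have c_gt0 i : 0 < c i by rewrite invr_gt0 sqrtr_gt0 inner_self_gt0 ?moment_vector_neq0.
have pattern_eq j : sign_pattern moment_embedding sigma x j =
                    sign_entry (c j * signed_eval (poly_of_row x) j).
  by rewrite ffunE /moment_embedding /normalize sigmaK inner_scaler (inner_moment_vector x).
have altcL : sign_alternating (fun i => c i * signed_eval (poly_of_row x) i) L.
  by apply: sign_alternating_scale altL => i j _ _; rewrite mulr_gt0.
have altX_ge := altX_ge_sign_alternating pattern_eq Ln altcL.
apply: leq_trans sizeL _; rewrite leq_add //.
by rewrite -subn1 leq_subLR add1n size_poly.
Qed.

End MomentEmbedding.

Lemma swapK (T : finType) : involutive (@swap T).
Proof. by case=> v b; rewrite /swap /= negbK. Qed.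

Section BoxMap.
Variables (R : realType) (V : finType) (E : {set {set V}}) (d : nat).
Variable phi : V -> 'rV[R]_d.+1.
Local Notation W := (KGvert E * bool)%type.
Implicit Types (x : 'rV[R]_d.+1) (w : W).

Definition orient (b : bool) x := if b then x else - x.

Definition box_weight x w : R := \prod_(v in val w.1) Num.max (inner (orient w.2 x) (phi v)) 0.

Definition box_mass x : R := \sum_w box_weight x w.

(* The correction term vanishes on the sphere and keeps the denominator
   positive off it, so that continuity can be checked on the whole space. *)
Definition box_denominator x : R := box_mass x + `|1 - inner x x|.

Definition box_map x w : R := box_weight x w / box_denominator x.

Lemma box_weight_ge0 x w : 0 <= box_weight x w.
Proof. by apply: prodr_ge0 => v _; rewrite le_max lexx orbT. Qed.

Lemma box_weight_neq0 x a b :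
  box_weight x (a, b) != 0 -> forall v, v \in val a -> 0 < inner (orient b x) (phi v).
Proof.
move=> /prodf_neq0 weight0 v av; have := weight0 v av.
by apply: contraNT; rewrite -leNgt => le0; rewrite max_r.
Qed.

Lemma box_weight_gt0_of_hits x b :
  hits E phi (orient b x) -> exists a, 0 < box_weight x (a, b).
Proof.
case=> e Ee e_pos; exists (exist _ e Ee).
by apply: prodr_gt0 => v ev; rewrite lt_max e_pos.
Qed.

Lemma box_weight_opp x w : box_weight (- x) w = box_weight x (swap w).
Proof. by case: w => a [] //=; rewrite /box_weight /= opprK. Qed.

Lemma box_mass_gt0 x w : 0 < box_weight x w -> 0 < box_mass x.
Proof.
move=> weight_gt0; rewrite /box_mass (bigD1 w) //= ltr_pwDl //.
by apply: sumr_ge0 => ? _; exact: box_weight_ge0.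
Qed.

Lemma box_mass_opp x : box_mass (- x) = box_mass x.
Proof.
rewrite /box_mass (reindex_inj (inv_inj (@swapK _))) /=.
by apply: eq_bigr => w _; rewrite box_weight_opp swapK.
Qed.

Lemma box_denominator_opp x : box_denominator (- x) = box_denominator x.
Proof. by rewrite /box_denominator box_mass_opp inner_oppl inner_oppr opprK. Qed.

Lemma box_weight_continuous w : continuous (box_weight ^~ w).
Proof.
apply: (continuous_big mul_continuous) => v _.
apply: (@max_fun_continuous _ _ R (fun y => inner (orient w.2 y) (phi v)) (fun=> 0));
  last exact: cst_continuous.
case: w.2 => /=; first exact: inner_continuous.
rewrite (_ : (fun _ => _) = fun y => inner y (- phi v)); first exact: inner_continuous.
by apply: funext => y; rewrite inner_oppl inner_oppr.
Qed.

Lemma box_denominator_continuous : continuous box_denominator.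
Proof.
move=> x; apply: continuousD.
  by apply: (continuous_big add_continuous) => w _; exact: box_weight_continuous.
apply: (@continuous_comp _ _ _ (fun y => 1 - inner y y) Num.norm); last exact: norm_continuous.
by apply: continuousB; [exact: cst_continuous | exact: inner_self_continuous].
Qed.

Lemma box_denominator_gt0 x :
  (forall y, sphere y -> 0 < box_mass y) -> 0 < box_denominator x.
Proof.
move=> mass_gt0; rewrite /box_denominator.
have [x_sphere | x_off] := eqVneq (inner x x) 1.
  by rewrite x_sphere subrr normr0 addr0 mass_gt0.
rewrite ltr_wpDl ?normr_gt0 ?subr_eq0 1?eq_sym //.
by apply: sumr_ge0 => w _; exact: box_weight_ge0.
Qed.

Lemma box_support_adj x a b :
  box_weight x (a, true) != 0 -> box_weight x (b, false) != 0 -> KGadj a b.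
Proof.
move=> /box_weight_neq0 a_pos /box_weight_neq0 b_pos.
rewrite /KGadj -setI_eq0; apply/set0Pn => -[v]; rewrite inE => /andP[av bv].
have := b_pos v bv; rewrite /= inner_oppl oppr_gt0 ltNge => /negP; apply.
exact/ltW/a_pos.
Qed.

Definition box_support x : {set W} := [set w | box_weight x w != 0].

Lemma box_map_equivariant (K : pred {set W}) :
  (forall x, sphere x -> 0 < box_mass x) -> (forall x, sphere x -> K (box_support x)) ->
  equivariant_map K box_map.
Proof.
move=> mass_gt0 K_support.
have den_neq0 x : box_denominator x != 0 by rewrite gt_eqF ?box_denominator_gt0.
split; [|split].
- move=> x x_sphere; split; [|split].
  + by move=> w; rewrite divr_ge0 ?box_weight_ge0 ?ltW ?box_denominator_gt0.
  + rewrite -mulr_suml /box_denominator x_sphere subrr normr0 addr0.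
    by rewrite divff // gt_eqF ?mass_gt0.
  + rewrite (_ : [set w | _] = box_support x); first exact: K_support.
    by apply/setP => w; rewrite !inE mulf_eq0 invr_eq0 (negPf (den_neq0 x)) orbF.
- by move=> x _; apply: funext => w; rewrite /box_map box_weight_opp box_denominator_opp.
- move=> w; apply: continuous_subspaceT => x.
  apply: (continuousM (s := box_weight ^~ w) (t := fun y => (box_denominator y)^-1));
    first exact: box_weight_continuous.
  by apply: continuousV (den_neq0 x) _; exact: box_denominator_continuous.
Qed.

Lemma box_support_B0 x : finset.set0 \notin E -> B0 (@KGadj V E) (box_support x).
Proof.
move=> E_nonempty; apply/andP; split.
  rewrite -setI_eq0; apply/eqP/setP => a; rewrite !inE.
  apply/negbTE/negP => /andP[/box_support_adj adj /adj].
  rewrite /KGadj -setI_eq0 finset.setIid => /eqP a0.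
  by move: (valP a); rewrite a0 (negPf E_nonempty).
apply/forall_inP => a; rewrite !inE => a_supp.
by apply/forall_inP => b; rewrite !inE; exact: box_support_adj.
Qed.

Lemma box_support_Bc x : finset.set0 \notin E ->
  hits E phi x -> hits E phi (- x) -> Bc (@KGadj V E) (box_support x).
Proof.
move=> E_nonempty /(box_weight_gt0_of_hits (b := true)) [a a_pos].
move=> /(box_weight_gt0_of_hits (b := false)) [b b_pos].
rewrite /Bc box_support_B0 //=; apply/andP; split; apply/set0Pn.
  exists b; rewrite inE; apply/forall_inP => a'; rewrite !inE => a'_supp.
  by apply: box_support_adj a'_supp _; rewrite gt_eqF.
exists a; rewrite inE; apply/forall_inP => b'; rewrite !inE => b'_supp.
by rewrite /KGadj disjoint_sym; apply: box_support_adj b'_supp; rewrite gt_eqF.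
Qed.

End BoxMap.

Lemma coind_B0_ge_dim (R : realType) (V : finType) (E : {set {set V}}) d :
  finset.set0 \notin E -> dim_admissible R E d -> coind_ge R (B0 (@KGadj V E)) d.
Proof.
move=> E_nonempty [phi [_ hits_x]]; exists d; split => //; exists (box_map phi).
apply: box_map_equivariant => [x /hits_x [] hits_xb|x _]; last exact: box_support_B0.
- by have [a /box_mass_gt0] := box_weight_gt0_of_hits (b := true) hits_xb.
- by have [a /box_mass_gt0] := box_weight_gt0_of_hits (b := false) hits_xb.
Qed.

Lemma coind_Bc_ge_sdim (R : realType) (V : finType) (E : {set {set V}}) d :
  finset.set0 \notin E -> sdim_admissible R E d -> coind_ge R (Bc (@KGadj V E)) d.
Proof.
move=> E_nonempty [phi [_ hits_x]]; exists d; split => //; exists (box_map phi).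
apply: box_map_equivariant => x /hits_x [hits_pos hits_neg]; last exact: box_support_Bc.
by have [a /box_mass_gt0] := box_weight_gt0_of_hits (b := true) hits_pos.
Qed.

Lemma big_minn_attained (I : finType) (P : pred I) (F : I -> nat) m :
  \big[minn/m]_(i | P i) F i = m \/ exists2 i, P i & \big[minn/m]_(i | P i) F i = F i.
Proof.
apply: (big_ind (fun k => k = m \/ exists2 i, P i & k = F i)); first by left.
  by move=> a b a_attained b_attained; rewrite /minn; case: ifP.
by move=> i Pi; right; exists i.
Qed.

Lemma ordering_cancel (V : finType) (s : ordering V) :
  injectiveb s -> exists g : V -> 'I_#|V|, cancel s g.
Proof.
move=> /injectiveP s_inj; have [|g sK _] := inj_card_bij s_inj; first by rewrite card_ord.
by exists g.
Qed.

Lemma lower_bound_of_min_ordering (V : finType) (F : ordering V -> nat) (P : nat -> Prop) :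
  (forall (s : ordering V) (g : V -> 'I_#|V|), cancel s g ->
     forall d, (F s + d < #|V|)%N -> P d) ->
  let m := \big[minn/#|V|]_(s : ordering V | injectiveb s) F s in
  (#|V|%:Z - m%:Z - 1 <= -1)%R \/ exists d : nat, (#|V|%:Z - m%:Z - 1 <= d%:Z)%R /\ P d.
Proof.
move=> P_of_F m; have [V_le_m | m_lt_V] := leqP #|V| m; first by left; lia.
right; have [m_V | [s s_inj m_Fs]] :=
  big_minn_attained (fun s : ordering V => injectiveb s) F #|V|.
  by move: m_lt_V; rewrite /m m_V ltnn.
have [g sK] := ordering_cancel s_inj.
exists (#|V| - m.+1)%N; split; first lia.
by apply: P_of_F sK _ _; rewrite -m_Fs -/m; lia.
Qed.

Theorem corollary2 (R : realType) (V : finType) (E : {set {set V}})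
  (HV : (0 < #|V|)%N) (HE : finset.set0 \notin E) :
  (* (a) coind(B_0(KG H)) >= dim H >= |V| - alt H - 1 *)
  ((forall d : nat, dim_admissible R E d -> coind_ge R (B0 (@KGadj V E)) d) /\
   ((#|V|%:Z - (alt E)%:Z - 1 <= -1)%R \/
    exists d : nat, (#|V|%:Z - (alt E)%:Z - 1 <= d%:Z)%R /\ dim_admissible R E d)) /\
  (* (b) coind(B(KG H)) >= sdim H >= |V| - salt H - 1 *)
  ((forall d : nat, sdim_admissible R E d -> coind_ge R (Bc (@KGadj V E)) d) /\
   ((#|V|%:Z - (salt E)%:Z - 1 <= -1)%R \/
    exists d : nat, (#|V|%:Z - (salt E)%:Z - 1 <= d%:Z)%R /\ sdim_admissible R E d)).
Proof.
split; split.
- by move=> d; exact: coind_B0_ge_dim.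
- apply: lower_bound_of_min_ordering => s g sK d.
  exact: dim_admissible_of_alt_sigma (moment_embedding_sphere R d g) (altX_moment_pattern sK).
- by move=> d; exact: coind_Bc_ge_sdim.
- apply: lower_bound_of_min_ordering => s g sK d.
  exact: sdim_admissible_of_salt_sigma (moment_embedding_sphere R d g) (altX_moment_pattern sK).
Qed.
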